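(* Let $N\ge 2$, let $\rho$ be a density matrix on $\mathbb{C}^N$ and let $|\psi\rangle\in\mathbb{C}^N$ be a unit vector. Then, computing $\mathcal{C}$ on the $N^2$-dimensional space $\mathbb{C}^N\otimes\mathbb{C}^N$, $$\mathcal{C}(\rho\otimes|\psi\rangle\langle\psi|)\le \frac{S(\rho)}{2\log_2 N}\left(D(\rho,\mathcal{I})+\frac{N-1}{N}\right).$$
   Context: For a density matrix $\rho$ (positive semidefinite, trace one) on an $N$-dimensional Hilbert space, $\mathcal{I}=\mathbb{I}/N$ is the normalized maximally mixed state. The von Neumann entropy is $S(\rho)=-\mathrm{Tr}[\rho\log_2\rho]$, and $D(\rho,\sigma)=\tfrac12\|\rho-\sigma\|_1$ is the trace distance. The Quantum Statistical Complexity Measure is $\mathcal{C}(\rho)=\frac{1}{\log_2 M}\,S(\rho)\,D(\rho,\mathbb{I}/M)$ for a state on an $M$-dimensional space. *)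

From Stdlib Require Import Reals Lra ClassicalEpsilon.
Open Scope R_scope.

Record C := mkC { re : R; im : R }.
Definition C0 : C := mkC 0 0.
Definition C1 : C := mkC 1 0.
Definition RtoC (x : R) : C := mkC x 0.
Definition Cadd (a b : C) : C := mkC (re a + re b) (im a + im b).
Definition Copp (a : C) : C := mkC (- re a) (- im a).
Definition Cmul (a b : C) : C :=
  mkC (re a * re b - im a * im b) (re a * im b + im a * re b).
Definition Cconj (a : C) : C := mkC (re a) (- im a).
Definition Cnorm2 (a : C) : R := re a * re a + im a * im a.

Fixpoint csum (n : nat) (f : nat -> C) : C :=
  match n with O => C0 | S k => Cadd (csum k f) (f k) end.
Fixpoint rsum (n : nat) (f : nat -> R) : R :=
  match n with O => 0 | S k => rsum k f + f k end.

(* ---------- matrices: n x n matrices are functions on indices < n ---------- *)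
Definition Mat := nat -> nat -> C.
Definition Vec := nat -> C.

Definition mat_eq (n : nat) (A B : Mat) : Prop :=
  forall i j, (i < n)%nat -> (j < n)%nat -> A i j = B i j.
Definition mmul (n : nat) (A B : Mat) : Mat :=
  fun i j => csum n (fun k => Cmul (A i k) (B k j)).
Definition madj (A : Mat) : Mat := fun i j => Cconj (A j i).
Definition msub (A B : Mat) : Mat := fun i j => Cadd (A i j) (Copp (B i j)).
Definition idm : Mat := fun i j => if Nat.eqb i j then C1 else C0.
Definition diagm (d : nat -> R) : Mat :=
  fun i j => if Nat.eqb i j then RtoC (d i) else C0.
Definition trace (n : nat) (A : Mat) : C := csum n (fun i => A i i).

Definition unitary (n : nat) (U : Mat) : Prop := mat_eq n (mmul n (madj U) U) idm.
Definition hermitian (n : nat) (A : Mat) : Prop := mat_eq n A (madj A).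
Definition psd (n : nat) (A : Mat) : Prop :=
  hermitian n A /\
  forall x : Vec,
    0 <= re (csum n (fun i => Cmul (Cconj (x i)) (csum n (fun j => Cmul (A i j) (x j))))).
Definition density (n : nat) (rho : Mat) : Prop := psd n rho /\ trace n rho = C1.
Definition unit_vec (n : nat) (psi : Vec) : Prop := rsum n (fun i => Cnorm2 (psi i)) = 1.
Definition ketbra (psi : Vec) : Mat := fun i j => Cmul (psi i) (Cconj (psi j)).
(* Kronecker product A (x) B of two N x N matrices, as an N^2 x N^2 matrix,
   with index (a,b) |-> a*N + b *)
Definition kron (N : nat) (A B : Mat) : Mat :=
  fun i j => Cmul (A (Nat.div i N) (Nat.div j N)) (B (Nat.modulo i N) (Nat.modulo j N)).
Definition maxmixed (M : nat) : Mat := diagm (fun _ => / INR M).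

Definition is_svd (n : nat) (A : Mat) (s : nat -> R) : Prop :=
  (forall i, 0 <= s i) /\
  exists U V, unitary n U /\ unitary n V /\ mat_eq n A (mmul n (mmul n U (diagm s)) (madj V)).
Definition singvals (n : nat) (A : Mat) : nat -> R :=
  epsilon (inhabits (fun _ : nat => 0)) (is_svd n A).
Definition trace_norm (n : nat) (A : Mat) : R := rsum n (singvals n A).
Definition tdist (n : nat) (rho sigma : Mat) : R := / 2 * trace_norm n (msub rho sigma).

Definition is_eigdec (n : nat) (A : Mat) (p : Mat * (nat -> R)) : Prop :=
  unitary n (fst p) /\ mat_eq n A (mmul n (mmul n (fst p) (diagm (snd p))) (madj (fst p))).
Definition eigdec (n : nat) (A : Mat) : Mat * (nat -> R) :=
  epsilon (inhabits (idm, fun _ : nat => 0)) (is_eigdec n A).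
Definition mfun (n : nat) (f : R -> R) (A : Mat) : Mat :=
  let p := eigdec n A in
  mmul n (mmul n (fst p) (diagm (fun i => f (snd p i)))) (madj (fst p)).

Definition log2 (x : R) : R := ln x / ln 2.
(* eta(x) = - x log2 x, with the convention 0 log 0 = 0 *)
Definition eta (x : R) : R := if Rle_dec x 0 then 0 else - (x * log2 x).
(* von Neumann entropy S(rho) = - Tr[rho log2 rho] = Tr[eta(rho)] *)
Definition vN (n : nat) (rho : Mat) : R := re (trace n (mfun n eta rho)).

Definition QSCM (M : nat) (rho : Mat) : R :=
  / log2 (INR M) * vN M rho * tdist M rho (maxmixed M).

(* Diagonalize rho = U diag(lam) U^* and |psi><psi| = Q diag(mu) Q^*; the
   projector is idempotent of trace one, so mu is a standard basis vector.
   Then rho (x) |psi><psi| and rho (x) |psi><psi| - I/N^2 are diagonal in the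
   basis U (x) Q, with eigenvalues lam_a mu_b and lam_a mu_b - 1/N^2.  Entropy
   and trace norm of a Hermitian matrix only depend on its spectrum
   (S = sum eta(lam), ||A||_1 = sum |lam|), so the entropy is unchanged, while
     sum_(a,b) |lam_a mu_b - 1/N^2| = sum_a |lam_a - 1/N^2| + (N-1)/N
                                    <= ||rho - I/N||_1 + 2 (N-1)/N.
   As log2 (N^2) = 2 log2 N and S >= 0, the bound follows. *)

From Pilot Require Import Defs.
From Stdlib Require Import Reals ClassicalEpsilon.
From mathcomp Require Import all_boot all_order all_algebra.
From mathcomp Require Import complex mxtens spectral.
From mathcomp Require Import Rstruct.
From mathcomp Require Import ring lra.
Set Implicit Arguments. Unset Strict Implicit. Unset Printing Implicit Defensive.
Import Order.TTheory GRing.Theory Num.Theory.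
Local Open Scope ring_scope.
Local Open Scope sesquilinear_scope.
Local Open Scope complex_scope.

Local Notation K := R[i].

Definition tocplx (a : Defs.C) : K := Complex (re a) (im a).
Definition ofcplx (z : K) : Defs.C := mkC (complex.Re z) (complex.Im z).

Lemma tocplxK : cancel tocplx ofcplx. Proof. by case. Qed.
Lemma ofcplxK : cancel ofcplx tocplx. Proof. by case. Qed.
Lemma tocplx_inj : injective tocplx. Proof. exact: can_inj tocplxK. Qed.

Lemma re_tocplx a : re a = complex.Re (tocplx a). Proof. by []. Qed.
Lemma tocplx_mul a b : tocplx (Cmul a b) = tocplx a * tocplx b. Proof. by []. Qed.
Lemma tocplx_conj a : tocplx (Cconj a) = (tocplx a)^*%R. Proof. by []. Qed.

Lemma tocplx_csum n f : tocplx (csum n f) = \sum_(i < n) tocplx (f i).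
Proof.
elim: n => [|n IH] /=; first by rewrite big_ord0.
by rewrite big_ord_recr /= -IH.
Qed.

Lemma rsumE n f : rsum n f = \sum_(i < n) f i.
Proof.
elim: n => [|n IH] /=; first by rewrite big_ord0.
by rewrite big_ord_recr /= IH.
Qed.

Definition tomx n (A : Mat) : 'M[K]_n := \matrix_(i, j) tocplx (A i j).

(* Entries outside the [n x n] block are irrelevant; they are set to zero. *)
Definition ofmx n (M : 'M[K]_n) : Mat := fun i j =>
  if (insub i, insub j) is (Some i', Some j') then ofcplx (M i' j') else C0.

Lemma ofmxK n : cancel (@ofmx n) (tomx n).
Proof. by move=> M; apply/matrixP => i j; rewrite !mxE /ofmx !valK ofcplxK. Qed.

Lemma tocplx_ofmx n (M : 'M[K]_n) (i j : 'I_n) : tocplx (ofmx M i j) = M i j.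
Proof. by rewrite /ofmx !valK ofcplxK. Qed.

Lemma mat_eq_tomx n A B : mat_eq n A B <-> tomx n A = tomx n B.
Proof.
split=> [eqAB|/matrixP eqAB i j /ssrnat.ltP ltin /ssrnat.ltP ltjn].
  by apply/matrixP => i j; rewrite !mxE eqAB //; apply/ssrnat.ltP.
by apply: tocplx_inj; have := eqAB (Ordinal ltin) (Ordinal ltjn); rewrite !mxE.
Qed.

Lemma tomx_mmul n A B : tomx n (mmul n A B) = tomx n A *m tomx n B.
Proof.
apply/matrixP => i j; rewrite !mxE tocplx_csum.
by apply: eq_bigr => k _; rewrite !mxE.
Qed.

Lemma tomx_madj n A : tomx n (madj A) = (tomx n A)^t*.
Proof. by apply/matrixP => i j; rewrite !mxE. Qed.

Lemma tomx_msub n A B : tomx n (msub A B) = tomx n A - tomx n B.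
Proof. by apply/matrixP => i j; rewrite !mxE. Qed.

Lemma tocplx_trace n A : tocplx (trace n A) = \tr (tomx n A).
Proof. by rewrite tocplx_csum; apply: eq_bigr => i _; rewrite mxE. Qed.

Definition rdiag n (d : nat -> R) : 'M[K]_n := diag_mx (\row_(i < n) (d i)%:C).

Lemma tomx_diagm n d : tomx n (diagm d) = rdiag n d.
Proof.
apply/matrixP => i j; rewrite !mxE /diagm.
have [<-|neq_ij] := eqVneq i j; first by rewrite Nat.eqb_refl.
by rewrite (introF (Nat.eqb_spec _ _)) // => /val_inj /eqP; rewrite (negPf neq_ij).
Qed.

Lemma rdiag1 n : rdiag n (fun _ => 1) = 1%:M.
Proof. by apply/matrixP => i j; rewrite !mxE. Qed.

Lemma unitary_tomx n U : unitary n U <-> tomx n U \is unitarymx.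
Proof.
rewrite /unitary (_ : idm = diagm (fun _ => 1)); last by [].
rewrite mat_eq_tomx tomx_mmul tomx_madj tomx_diagm rdiag1.
by rewrite -trmxC_unitary qualifE trmxCK; split=> [->|/eqP].
Qed.

(** * Spectral decompositions *)

Lemma trmxC_mul m n p (A : 'M[K]_(m, n)) (B : 'M[K]_(n, p)) :
  (A *m B)^t* = B^t* *m A^t*.
Proof. by rewrite trmx_mul map_mxM. Qed.

Lemma rdiag_adj n d : (rdiag n d)^t* = rdiag n d.
Proof.
apply/matrixP => i j; rewrite !mxE.
have [->|_] := eqVneq i j; rewrite /= ?mulr1n ?mulr0n ?conjC0 //; exact: conjc_real.
Qed.

Lemma rdiag_mul n d e : rdiag n d *m rdiag n e = rdiag n (fun k => d k * e k).
Proof. by apply/matrixP => i j; rewrite mul_diag_mx !mxE mulrnAr rmorphM. Qed.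

Lemma rdiagB n d e : rdiag n (fun k => d k - e k) = rdiag n d - rdiag n e.
Proof. by apply/matrixP => i j; rewrite !mxE -mulrnBl rmorphB. Qed.

Lemma rdiag_scalar n c : rdiag n (fun _ => c) = c%:C%:M.
Proof. by apply/matrixP => i j; rewrite !mxE. Qed.

Lemma eq_rdiag n (d e : nat -> R) : (forall i : 'I_n, d i = e i) -> rdiag n d = rdiag n e.
Proof. by move=> eq_de; apply/matrixP => i j; rewrite !mxE eq_de. Qed.

Lemma rdiag_inj n d e : rdiag n d = rdiag n e -> forall i : 'I_n, d i = e i.
Proof. by move=> /matrixP eq_de i; have := eq_de i i; rewrite !mxE eqxx !mulr1n => /complexI. Qed.

Lemma mxtrace_rdiag n d : \tr (rdiag n d) = (\sum_(i < n) d i)%:C.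
Proof. by rewrite mxtrace_diag rmorph_sum; apply: eq_bigr => i _; rewrite mxE. Qed.

Lemma unitarymx_tC n (U : 'M[K]_n) : U \is unitarymx -> U^t* *m U = 1%:M.
Proof. by move/unitarymxP/mulmx1C. Qed.

Lemma unitary_conj_scalar n (U : 'M[K]_n) c :
  U \is unitarymx -> U *m rdiag n (fun _ => c) *m U^t* = rdiag n (fun _ => c).
Proof. by move=> Uu; rewrite rdiag_scalar scalar_mxC mulmxtVK. Qed.

Lemma hermitian_diagonalization n (A : 'M[K]_n) : A = A^t* ->
  exists U d, U \is unitarymx /\ A = U *m rdiag n d *m U^t*.
Proof.
move=> hA; have Aherm : A \is hermsymmx by apply/is_hermitianmxP; rewrite expr0 scale1r.
have /orthomx_spectralP -> := hermitian_normalmx Aherm.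
have /mxOverP sp_real := hermitian_spectral_diag_real Aherm.
exists ((spectralmx A)^t*),
  (fun k => if insub k is Some i then complex.Re (spectral_diag A 0 i) else 0).
rewrite trmxC_unitary trmxCK (invmx_unitary (spectral_unitarymx A)).
split; first exact: spectral_unitarymx.
congr (_ *m diag_mx _ *m _); apply/matrixP => i j.
by rewrite ord1 !mxE valK RRe_real.
Qed.

Lemma unitary_row_norm n (X : 'M[K]_n) k :
  X \is unitarymx -> \sum_l X k l * (X k l)^* = 1.
Proof.
move/unitarymxP/matrixP/(_ k k); rewrite !mxE eqxx mulr1n => <-.
by apply: eq_bigr => l _; rewrite !mxE.
Qed.

Lemma unitary_col_norm n (X : 'M[K]_n) l :
  X \is unitarymx -> \sum_k X k l * (X k l)^* = 1.
Proof.
by rewrite -trmx_unitary => /(unitary_row_norm l); under eq_bigr do rewrite mxE.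
Qed.

(* [V^t* U] intertwines the two diagonal matrices, so it only connects equal
   eigenvalues; its rows and columns are unit vectors. *)
Lemma unitary_diag_sum_eq (g : R -> R) n (U V : 'M[K]_n) d e :
  U \is unitarymx -> V \is unitarymx ->
  U *m rdiag n d *m U^t* = V *m rdiag n e *m V^t* ->
  \sum_(i < n) g (d i) = \sum_(i < n) g (e i).
Proof.
move=> Uu Vu eqUV; set X := V^t* *m U.
have Xu : X \is unitarymx := mul_unitarymx (etrans (trmxC_unitary V) Vu) Uu.
have intertwine : X *m rdiag n d = rdiag n e *m X.
  rewrite /X -mulmxA -[U *m _](mulmxKtV _ Uu erefl) eqUV !mulmxA.
  by rewrite (unitarymx_tC Vu) mul1mx.
clearbody X.
have link (k l : 'I_n) :
    (g (d l))%:C * (X k l * (X k l)^*) = (g (e k))%:C * (X k l * (X k l)^*).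
  have [->|nzX] := eqVneq (X k l) 0; first by rewrite !mul0r !mulr0.
  suff -> : d l = e k by [].
  move/matrixP: intertwine => /(_ k l); rewrite mul_mx_diag mul_diag_mx !mxE mulrC.
  by move=> h; apply: complexI; apply: (mulIf nzX).
apply: complexI; rewrite !rmorph_sum.
transitivity (\sum_(l < n) \sum_(k < n) (g (d l))%:C * (X k l * (X k l)^*)).
  by apply: eq_bigr => l _; rewrite -mulr_sumr unitary_col_norm ?mulr1.
transitivity (\sum_(k < n) \sum_(l < n) (g (e k))%:C * (X k l * (X k l)^*)); last first.
  by apply: eq_bigr => k _; rewrite -mulr_sumr unitary_row_norm ?mulr1.
by rewrite exchange_big; apply: eq_bigr => k _; apply: eq_bigr => l _; apply: link.
Qed.

Lemma hermitian_tomx n A : Defs.hermitian n A <-> tomx n A = (tomx n A)^t*.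
Proof. by rewrite /Defs.hermitian mat_eq_tomx tomx_madj. Qed.

Lemma hermitian_spectral n A : Defs.hermitian n A ->
  exists U d, U \is unitarymx /\ tomx n A = U *m rdiag n d *m U^t*.
Proof. by move/hermitian_tomx/hermitian_diagonalization. Qed.

Lemma is_eigdec_tomx n A p : is_eigdec n A p <->
  tomx n p.1 \is unitarymx /\ tomx n A = tomx n p.1 *m rdiag n p.2 *m (tomx n p.1)^t*.
Proof. by rewrite /is_eigdec unitary_tomx mat_eq_tomx !tomx_mmul tomx_madj tomx_diagm. Qed.

Lemma mxtrace_unitary_conj n (U M : 'M[K]_n) :
  U \is unitarymx -> \tr (U *m M *m U^t*) = \tr M.
Proof. by move=> Uu; rewrite mxtrace_mulC mulmxA unitarymx_tC ?mul1mx. Qed.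

Lemma vN_spectral n A (U : 'M[K]_n) d : U \is unitarymx ->
  tomx n A = U *m rdiag n d *m U^t* -> vN n A = \sum_(i < n) Defs.eta (d i).
Proof.
move=> Uu hA; have : is_eigdec n A (eigdec n A).
  by apply: epsilon_spec; exists (ofmx U, d); apply/is_eigdec_tomx; rewrite /= ofmxK.
rewrite /vN /mfun; case: (eigdec n A) => V e /is_eigdec_tomx /= [Vu hAV].
rewrite re_tocplx tocplx_trace !tomx_mmul.
rewrite tomx_madj tomx_diagm (mxtrace_unitary_conj _ Vu) mxtrace_rdiag /=.
by apply: (unitary_diag_sum_eq Defs.eta Vu Uu); rewrite -hAV.
Qed.

Lemma is_svd_tomx n A s : is_svd n A s <->
  (forall i, 0 <= s i) /\ exists U V : 'M[K]_n,
    [/\ U \is unitarymx, V \is unitarymx & tomx n A = U *m rdiag n s *m V^t*].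
Proof.
rewrite /is_svd; split=> [[s_ge0 [U [V [Uu [Vu hA]]]]]|[s_ge0 [U [V [Uu Vu hA]]]]].
  split=> [i|]; first exact/RleP.
  exists (tomx n U), (tomx n V); move: Uu Vu hA.
  by rewrite !unitary_tomx mat_eq_tomx !tomx_mmul tomx_madj tomx_diagm; split.
split=> [i|]; first exact/RleP.
exists (ofmx U), (ofmx V).
by rewrite !unitary_tomx mat_eq_tomx !tomx_mmul tomx_madj tomx_diagm !ofmxK.
Qed.

Lemma rdiag_unitary n d : (forall k, d k * d k = 1) -> rdiag n d \is unitarymx.
Proof.
move=> d_sqr; apply/unitarymxP/matrixP => i j; rewrite rdiag_adj mul_diag_mx !mxE.
by have [->|_] := eqVneq i j; rewrite /= ?mulr1n ?mulr0n ?mulr0 // -rmorphM d_sqr.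
Qed.

(* Flipping the signs of the columns of the right factor turns an
   eigendecomposition into a singular value decomposition. *)
Lemma is_svd_singvals n A (U : 'M[K]_n) d : U \is unitarymx ->
  tomx n A = U *m rdiag n d *m U^t* -> is_svd n A (singvals n A).
Proof.
move=> Uu hA; apply: epsilon_spec; exists (fun k => `|d k|); apply/is_svd_tomx.
split=> [k|]; first exact: normr_ge0.
pose sg k : R := if 0 <= d k then 1 else -1.
have sg_sqr k : sg k * sg k = 1 by rewrite /sg; case: ifP; rewrite ?mulr1 ?mulrNN ?mulr1.
have abs_sg k : `|d k| * sg k = d k.
  rewrite /sg; case: ifPn => [/ger0_norm ->|]; first by rewrite mulr1.
  by rewrite -ltNge => /ltr0_norm ->; rewrite mulrNN mulr1.
exists U, (U *m rdiag n sg).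
split; [exact: Uu | exact: mul_unitarymx Uu (rdiag_unitary _ sg_sqr) |].
rewrite hA trmxC_mul rdiag_adj mulmxA; congr (_ *m _).
by rewrite -mulmxA rdiag_mul; congr (_ *m _); apply: eq_rdiag => k; rewrite abs_sg.
Qed.

Lemma svd_gram n (W V : 'M[K]_n) s : W \is unitarymx ->
  (W *m rdiag n s *m V^t*)^t* *m (W *m rdiag n s *m V^t*)
    = V *m rdiag n (fun k => s k * s k) *m V^t*.
Proof.
move=> Wu; rewrite !trmxC_mul trmxCK rdiag_adj !mulmxA -(mulmxA _ (W^t*)).
by rewrite (unitarymx_tC Wu) mulmx1 -(mulmxA V (rdiag n s)) rdiag_mul.
Qed.

(* Both decompositions diagonalize [A^t* A]; compare the square roots of
   its eigenvalues. *)
Lemma trace_norm_spectral n A (U : 'M[K]_n) d : U \is unitarymx ->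
  tomx n A = U *m rdiag n d *m U^t* -> trace_norm n A = \sum_(i < n) `|d i|.
Proof.
move=> Uu hA; rewrite /trace_norm rsumE; set s := singvals n A.
have /is_svd_tomx [s_ge0 [W [V [Wu Vu hAs]]]] : is_svd n A s := is_svd_singvals Uu hA.
have := @unitary_diag_sum_eq Num.sqrt n V U (fun k => s k * s k) (fun k => d k * d k) Vu Uu.
rewrite -(svd_gram _ _ Wu) -(svd_gram _ _ Uu) -hAs -hA => /(_ erefl).
under eq_bigr do rewrite -expr2 sqrtr_sqr ger0_norm //.
by under [in RHS]eq_bigr do rewrite -expr2 sqrtr_sqr.
Qed.

(** * Density matrices and pure states *)

Lemma unitary_unconj n (U M : 'M[K]_n) :
  U \is unitarymx -> U^t* *m (U *m M *m U^t*) *m U = M.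
Proof. by move=> Uu; rewrite !mulmxA (unitarymx_tC Uu) mul1mx (mulmxKtV _ Uu erefl). Qed.

Lemma quadform_col n (A U : 'M[K]_n) (i : 'I_n) :
  \sum_j (U j i)^* * \sum_k A j k * U k i = (U^t* *m A *m U) i i.
Proof.
rewrite mxE; under eq_bigr do rewrite mulr_sumr.
rewrite exchange_big /=; apply: eq_bigr => k _; rewrite mxE mulr_suml.
by apply: eq_bigr => j _; rewrite !mxE mulrA.
Qed.

(* The eigenvalues of a density matrix are the values of its quadratic form
   at the eigenvectors, the columns of [U]. *)
Lemma density_spectrum n rho : density n rho ->
  exists U lam, [/\ U \is unitarymx, tomx n rho = U *m rdiag n lam *m U^t*,
    forall i : 'I_n, 0 <= lam i & \sum_(i < n) lam i = 1].
Proof.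
move=> [[rho_herm rho_psd] rho_tr].
have [U [lam [Uu hrho]]] := hermitian_spectral rho_herm.
exists U, lam; split; [exact: Uu | exact: hrho | move=> i |].
  have := rho_psd (fun j => ofmx U j i); rewrite re_tocplx tocplx_csum => /RleP.
  have -> : \sum_(j < n) tocplx (Cmul (Cconj (ofmx U j i))
                                   (csum n (fun k => Cmul (rho j k) (ofmx U k i))))
      = \sum_j (U j i)^* * \sum_k tomx n rho j k * U k i.
    apply: eq_bigr => j _; rewrite tocplx_mul tocplx_conj tocplx_ofmx tocplx_csum.
    by congr (_ * _); apply: eq_bigr => k _; rewrite tocplx_mul tocplx_ofmx mxE.
  by rewrite quadform_col hrho (unitary_unconj _ Uu) !mxE eqxx mulr1n.
apply: complexI; rewrite -mxtrace_rdiag -(mxtrace_unitary_conj _ Uu) -hrho.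
by rewrite -tocplx_trace rho_tr.
Qed.

Lemma idempotent_spectrum n (U M : 'M[K]_n) mu : U \is unitarymx ->
  M = U *m rdiag n mu *m U^t* -> M *m M = M -> forall i : 'I_n, mu i = 0 \/ mu i = 1.
Proof.
move=> Uu hM MM i.
have hD : rdiag n mu = U^t* *m M *m U by rewrite hM unitary_unconj.
have : rdiag n mu *m rdiag n mu = rdiag n mu.
  rewrite hD !mulmxA -(mulmxA _ U (U^t*)) (unitarymxP Uu) mulmx1.
  by rewrite -(mulmxA _ M M) MM.
rewrite rdiag_mul => /rdiag_inj/(_ i) mu_sqr.
have /eqP : mu i * (mu i - 1) = 0 by rewrite mulrBr mulr1 mu_sqr subrr.
by rewrite mulf_eq0 subr_eq0 => /orP[/eqP|/eqP]; [left|right].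
Qed.

Section PureState.
Variables (n : nat) (psi : Vec).
Let P := tomx n (ketbra psi).

Lemma ketbra_herm : P = P^t*.
Proof.
apply/matrixP => i j; rewrite !mxE /ketbra.
case: (psi i) (psi j) => [a b] [c d]; apply/eqP.
rewrite eq_complex /= ?(RminusE, RplusE, RmultE, RoppE).
by apply/andP; split; apply/eqP; ring.
Qed.

Hypothesis psi_unit : unit_vec n psi.

Lemma ketbra_norm : \sum_(k < n) (tocplx (psi k))^* * tocplx (psi k) = 1.
Proof.
transitivity ((rsum n (fun k => Cnorm2 (psi k)))%:C); last by rewrite psi_unit.
rewrite rsumE rmorph_sum; apply: eq_bigr => k _.
case: (psi k) => a b; apply/eqP.
rewrite eq_complex /= /Cnorm2 ?(RminusE, RplusE, RmultE, RoppE) /=.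
by apply/andP; split; apply/eqP; ring.
Qed.

Lemma ketbra_idem : P *m P = P.
Proof.
apply/matrixP => i j; rewrite !mxE /ketbra.
under eq_bigr do rewrite !mxE !tocplx_mul !tocplx_conj mulrA -[_ * _ * tocplx (psi _)]mulrA.
by rewrite -mulr_suml -mulr_sumr ketbra_norm mulr1 tocplx_mul tocplx_conj.
Qed.

Lemma ketbra_trace : \tr P = 1.
Proof.
by rewrite -ketbra_norm; apply: eq_bigr => k _; rewrite mxE tocplx_mul tocplx_conj mulrC.
Qed.

End PureState.

Lemma pure_spectrum n psi : unit_vec n psi ->
  exists Q mu, [/\ Q \is unitarymx, tomx n (ketbra psi) = Q *m rdiag n mu *m Q^t*,
    forall i : 'I_n, mu i = 0 \/ mu i = 1 & \sum_(i < n) mu i = 1].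
Proof.
move=> psi_unit; have [Q [mu [Qu hP]]] := hermitian_diagonalization (ketbra_herm n psi).
exists Q, mu; split; [exact: Qu | exact: hP | |].
  exact: idempotent_spectrum Qu hP (ketbra_idem psi_unit).
apply: complexI; rewrite -mxtrace_rdiag -(mxtrace_unitary_conj _ Qu) -hP.
exact: ketbra_trace psi_unit.
Qed.

(** * Tensor products *)

Lemma Nat_div_divn m d : Nat.div m d = (m %/ d)%N.
Proof.
case: d => [|d]; first by rewrite divn0.
symmetry; apply: (Nat.div_unique _ _ _ (m %% d.+1)%N).
  by apply/ssrnat.ltP; rewrite ltn_mod.
by rewrite {1}(divn_eq m d.+1) mulnC.
Qed.

Lemma Nat_mod_modn m d : Nat.modulo m d = (m %% d)%N.
Proof.
case: d => [|d]; first by rewrite modn0.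
symmetry; apply: (Nat.mod_unique _ _ (m %/ d.+1)%N).
  by apply/ssrnat.ltP; rewrite ltn_mod.
by rewrite {1}(divn_eq m d.+1) mulnC.
Qed.

Lemma tomx_kron n A B : tomx (n * n) (kron n A B) = tomx n A *t tomx n B.
Proof. by apply/matrixP => i j; rewrite !mxE /kron tocplx_mul !Nat_div_divn !Nat_mod_modn. Qed.

Lemma trmxC_tens m n (A : 'M[K]_m) (B : 'M[K]_n) : (A *t B)^t* = A^t* *t B^t*.
Proof. by rewrite trmx_tens map_mxT. Qed.

Lemma tensmx_rdiag m n d e :
  rdiag m d *t rdiag n e = rdiag (m * n) (fun k => d (k %/ n)%N * e (k %% n)%N).
Proof.
apply/matrixP => i j.
case: (mxtens_indexP i) => i1 i2; case: (mxtens_indexP j) => j1 j2.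
have idx_div (a : 'I_m) (b : 'I_n) : (mxtens_index (a, b) %/ n)%N = a.
  by move: (congr1 (fun p => val p.1) (mxtens_indexK (a, b))).
have idx_mod (a : 'I_m) (b : 'I_n) : (mxtens_index (a, b) %% n)%N = b.
  by move: (congr1 (fun p => val p.2) (mxtens_indexK (a, b))).
rewrite tensmxE !mxE idx_div idx_mod (can_eq (@mxtens_indexK m n)) xpair_eqE.
by case: (i1 == j1); case: (i2 == j2); rewrite /= ?mulr1n ?mulr0n ?mulr0 ?mul0r ?rmorphM.
Qed.

Lemma tensmx_unitary m n (U : 'M[K]_m) (V : 'M[K]_n) :
  U \is unitarymx -> V \is unitarymx -> U *t V \is unitarymx.
Proof.
move=> /unitarymxP Uu /unitarymxP Vu; apply/unitarymxP.
rewrite trmxC_tens tensmx_mul Uu Vu -!rdiag1 tensmx_rdiag.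
by apply: eq_rdiag => k; rewrite mulr1.
Qed.

Lemma kron_spectral n A B (U V : 'M[K]_n) d e :
  tomx n A = U *m rdiag n d *m U^t* -> tomx n B = V *m rdiag n e *m V^t* ->
  tomx (n * n) (kron n A B)
    = (U *t V) *m rdiag (n * n) (fun k => d (k %/ n)%N * e (k %% n)%N) *m (U *t V)^t*.
Proof. by move=> hA hB; rewrite tomx_kron hA hB trmxC_tens -tensmx_rdiag !tensmx_mul. Qed.

Lemma sum_mxtens (T : nmodType) m n (F : 'I_m * 'I_n -> T) :
  \sum_(k < m * n) F (mxtens_unindex k) = \sum_(i < m) \sum_(j < n) F (i, j).
Proof.
rewrite pair_big /= (reindex (@mxtens_index m n)) /=; last first.
  by exists (@mxtens_unindex m n) => k _; rewrite (mxtens_indexK, mxtens_unindexK).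
by apply: eq_bigr => -[i j] _; rewrite mxtens_indexK.
Qed.

(* Against a 0/1 vector [mu] with a single 1, each [lam a] meets one 1 and
   [n - 1] zeros. *)
Lemma sum_tens_pure (f : R -> R) n (lam mu : nat -> R) :
  (forall i : 'I_n, mu i = 0 \/ mu i = 1) -> \sum_(i < n) mu i = 1 ->
  \sum_(k < n * n) f (lam (k %/ n)%N * mu (k %% n)%N)
    = \sum_(i < n) f (lam i) + n%:R * (n%:R - 1) * f 0.
Proof.
move=> mu01 mu_sum.
have split_f a (b : 'I_n) : f (lam a * mu b) = mu b * f (lam a) + (1 - mu b) * f 0.
  by case: (mu01 b) => ->; rewrite ?mulr0 ?mulr1 ?subr0 ?subrr ?mul0r ?mul1r ?add0r ?addr0.
transitivity (\sum_(k < n * n)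
  (fun p : 'I_n * 'I_n => f (lam p.1 * mu p.2)) (mxtens_unindex k)); first by [].
rewrite (sum_mxtens (fun p : 'I_n * 'I_n => f (lam p.1 * mu p.2))).
transitivity (\sum_(a < n) (f (lam a) + (n%:R - 1) * f 0)).
  apply: eq_bigr => a _; rewrite (eq_bigr _ (fun b _ => split_f a b)) big_split /=.
  by rewrite -!mulr_suml mu_sum mul1r sumrB mu_sum sumr_const card_ord.
by rewrite big_split /= sumr_const card_ord -[in RHS]mulrA mulr_natl.
Qed.

Section Logarithms.
Local Open Scope R_scope.

Lemma ln2_gt0 : 0 < ln 2.
Proof. by rewrite -ln_1; apply: ln_increasing; [exact: Rlt_0_1 | exact: (Rlt_plus_1 1)]. Qed.

Lemma log2_gt0 x : 1 < x -> 0 < log2 x.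
Proof.
move=> x_gt1; apply: Rdiv_lt_0_compat ln2_gt0.
by rewrite -ln_1; apply: ln_increasing => //; exact: Rlt_0_1.
Qed.

Lemma log2_sqr x : 0 < x -> log2 (x * x) = 2 * log2 x.
Proof. by move=> x_gt0; rewrite /log2 ln_mult // /Rdiv Rmult_plus_distr_r Rplus_diag. Qed.

Lemma eta0 : Defs.eta 0 = 0.
Proof. by rewrite /Defs.eta; case: Rle_dec => // -[]; exact: Rle_refl. Qed.

Lemma eta_ge0 x : x <= 1 -> 0 <= Defs.eta x.
Proof.
move=> x_le1; rewrite /Defs.eta; case: Rle_dec => [_|/Rnot_le_lt x_gt0].
  exact: Rle_refl.
have lnx_le0 : ln x <= 0.
  case: (Rle_lt_or_eq_dec _ _ x_le1) => [x_lt1|->]; last by rewrite ln_1; exact: Rle_refl.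
  by rewrite -ln_1; apply/Rlt_le/ln_increasing.
rewrite /log2 /Rdiv Ropp_mult_distr_r Ropp_mult_distr_l.
apply: Rmult_le_pos; first exact: Rlt_le.
apply: Rmult_le_pos; last exact/Rlt_le/Rinv_0_lt_compat/ln2_gt0.
by rewrite -Ropp_0; apply: Ropp_le_contravar.
Qed.

End Logarithms.

(** * Entropy and trace distance of a product with a pure state *)

Lemma vN_kron_pure n rho psi : Defs.hermitian n rho -> unit_vec n psi ->
  vN (n * n) (kron n rho (ketbra psi)) = vN n rho.
Proof.
move=> /hermitian_spectral [U [lam [Uu hrho]]].
move=> /pure_spectrum [Q [mu [Qu hP mu01 mu_sum]]].
rewrite (vN_spectral Uu hrho) (vN_spectral (tensmx_unitary Uu Qu) (kron_spectral hrho hP)).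
by rewrite (sum_tens_pure _ _ mu01 mu_sum) eta0 mulr0 addr0.
Qed.

Lemma vN_density_ge0 n rho : density n rho -> 0 <= vN n rho.
Proof.
move=> /density_spectrum [U [lam [Uu hrho lam_ge0 lam_sum]]].
rewrite (vN_spectral Uu hrho); apply: sumr_ge0 => i _.
have lam_le1 : lam i <= 1 by rewrite -lam_sum (bigD1 i) //= lerDl sumr_ge0.
by apply/RleP/eta_ge0/RleP.
Qed.

Lemma tdist_spectral n A B (U : 'M[K]_n) d : U \is unitarymx ->
  tomx n (msub A B) = U *m rdiag n d *m U^t* -> tdist n A B = (\sum_(i < n) `|d i|) / 2.
Proof.
move=> Uu hAB.
by rewrite /tdist (trace_norm_spectral Uu hAB) RmultE RinvE IZRposE INRE mulrC.
Qed.

Lemma tomx_maxmixed n : tomx n (maxmixed n) = rdiag n (fun _ => n%:R^-1).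
Proof. by rewrite tomx_diagm; apply: eq_rdiag => k; rewrite RinvE INRE. Qed.

Lemma sum_abs_shift_le n (lam : nat -> R) (c : R) : 0 <= c -> c <= 1 ->
  \sum_(i < n) `|lam i - c * c| <= \sum_(i < n) `|lam i - c| + n%:R * (c - c * c).
Proof.
move=> c_ge0 c_le1.
have c2_le_c : c * c <= c by rewrite ler_piMr.
apply: (@le_trans _ _ (\sum_(i < n) (`|lam i - c| + (c - c * c)))).
  apply: ler_sum => i _; rewrite -[c - c * c]ger0_norm ?subr_ge0 //.
  by rewrite (_ : lam i - c * c = (lam i - c) + (c - c * c)) ?ler_normD //; ring.
by rewrite big_split /= sumr_const card_ord mulr_natl.
Qed.

Lemma tdist_kron_pure_le n rho psi :
  (0 < n)%N -> Defs.hermitian n rho -> unit_vec n psi ->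
  tdist (n * n) (kron n rho (ketbra psi)) (maxmixed (n * n))
    <= tdist n rho (maxmixed n) + (1 - n%:R^-1).
Proof.
move=> n_gt0 /hermitian_spectral [U [lam [Uu hrho]]].
move=> /pure_spectrum [Q [mu [Qu hP mu01 mu_sum]]].
set c : R := n%:R^-1.
have nc : n%:R * c = 1 by rewrite mulfV // pnatr_eq0 -lt0n.
have c_ge0 : 0 <= c by rewrite invr_ge0 ler0n.
have c_le1 : c <= 1 by rewrite invf_le1 ?ltr0n // ler1n.
have UQu := tensmx_unitary Uu Qu.
rewrite (@tdist_spectral _ _ _ _ (fun k => lam k - c) Uu); last first.
  by rewrite tomx_msub hrho tomx_maxmixed rdiagB mulmxBr mulmxBl (unitary_conj_scalar _ Uu).
rewrite (@tdist_spectral _ _ _ _ (fun k => lam (k %/ n)%N * mu (k %% n)%N - c * c) UQu); last first.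
  rewrite tomx_msub (kron_spectral hrho hP) tomx_maxmixed rdiagB mulmxBr mulmxBl.
  by rewrite (unitary_conj_scalar _ UQu) natrM invfM.
rewrite (sum_tens_pure (fun x => `|x - c * c|) _ mu01 mu_sum) /= sub0r normrN.
rewrite ger0_norm ?mulr_ge0 //.
have mass_c : n%:R * (c - c * c) = 1 - c.
  by transitivity (n%:R * c - n%:R * c * c); [ring | rewrite nc !mul1r].
have mass_c2 : n%:R * (n%:R - 1) * (c * c) = 1 - c.
  by transitivity (n%:R * c * (n%:R * c) - n%:R * c * c); [ring | rewrite nc !mul1r].
have := sum_abs_shift_le n lam c_ge0 c_le1; rewrite mass_c mass_c2; lra.
Qed.

Local Open Scope R_scope.

Theorem mainTheorem7 (N : nat) (rho : Mat) (psi : Vec) :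
  Peano.le 2 N ->
  density N rho ->
  unit_vec N psi ->
  QSCM (Nat.mul N N) (kron N rho (ketbra psi))
    <= vN N rho / (2 * log2 (INR N)) * (tdist N rho (maxmixed N) + INR (Nat.sub N 1) / INR N).
Proof.
move=> /ssrnat.leP N_ge2 rho_dens psi_unit.
have N_gt0 : (0 < N)%N by apply: leq_trans N_ge2.
have N_gt1 : 1 < INR N by rewrite INRE; apply/RltP; rewrite ltr1n.
rewrite /QSCM mult_INR multE log2_sqr ?(vN_kron_pure rho_dens.1.1 psi_unit); last first.
  exact: Rlt_trans Rlt_0_1 N_gt1.
have S_ge0 := vN_density_ge0 rho_dens.
have L_gt0 : (0 < log2 N%:R)%R by apply/RltP; rewrite -INRE; exact: log2_gt0.
have td_le := tdist_kron_pure_le N_gt0 rho_dens.1.1 psi_unit.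
have -> : INR (Nat.sub N 1) / INR N = 1 - / INR N.
  have N_neq0 : N%:R != 0 :> R by rewrite pnatr_eq0 -lt0n.
  rewrite minusE !INRE RdivE RinvE RminusE (natrB _ N_gt0) mulrBl (mulfV N_neq0).
  by rewrite div1r.
apply/RleP; rewrite !(RmultE, RinvE, RdivE, RplusE, RminusE) INRE.
rewrite (mulrC _ (vN N rho)); apply: ler_wpM2l td_le.
apply: divr_ge0 S_ge0 (ltW (mulr_gt0 _ L_gt0)); exact/RltP/Rlt_0_2.
Qed.
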